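(* Let $\mathrm{S}$ be an associative semicopula (i.e. $\mathrm{S}(\mathrm{S}(x,y),z)=\mathrm{S}(x,\mathrm{S}(y,z))$ for all $x,y,z\in[0,1]$) such that for every $a\in(0,1)$ the function $x\mapsto\mathrm{S}(a,x)$ on $[0,1]$ is strictly increasing and left-continuous, and its discontinuity points are isolated in the sense that for every discontinuity point $z$ of $x\mapsto\mathrm{S}(a,x)$ there is $\varepsilon>0$ such that $x\mapsto\mathrm{S}(a,x)$ is continuous on $(z,z+\varepsilon)$. Then for every measurable space $(X,\mathcal{A})$, every capacity $\mu$ on $\mathcal{A}$ that is continuous from below, every $\mathcal{A}$-measurable $f\colon X\to[0,1]$ and every $a\in[0,1]$, $$\mathbf{I}_{\mathrm{S}}\big(\mu,\mathrm{S}(a,f)\big)=\mathrm{S}\big(a,\mathbf{I}_{\mathrm{S}}(\mu,f)\big),$$ where $\mathrm{S}(a,f)$ denotes the function $x\mapsto\mathrm{S}(a,f(x))$.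
   Context: A semicopula is a function $\mathrm{S}\colon[0,1]^2\to[0,1]$ that is non-decreasing in each coordinate and has neutral element $1$, i.e. $\mathrm{S}(x,1)=\mathrm{S}(1,x)=x$ for all $x\in[0,1]$. For a measurable space $(X,\mathcal{A})$ (with $X$ nonempty and $\mathcal{A}$ a $\sigma$-algebra), a capacity on $\mathcal{A}$ is a non-decreasing set function $\mu\colon\mathcal{A}\to[0,1]$ with $\mu(\emptyset)=0$ and $\mu(X)=1$; it is continuous from below if $\lim_{n\to\infty}\mu(A_n)=\mu\big(\bigcup_{k\ge1}A_k\big)$ whenever $A_1\subseteq A_2\subseteq\cdots$ are in $\mathcal{A}$. For a capacity $\mu$ and an $\mathcal{A}$-measurable $f\colon X\to[0,1]$, the generalized Sugeno integral is $$\mathbf{I}_{\mathrm{S}}(\mu,f)=\sup_{t\in[0,1]}\mathrm{S}\big(t,\mu(\{x\in X: f(x)\ge t\})\big).$$ *)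

From Stdlib Require Import Reals Classical ClassicalEpsilon.
Open Scope R_scope.

Definition in01 (x : R) : Prop := 0 <= x <= 1.

(* Supremum of a set of reals (chosen least upper bound; 0 if none exists). *)
Definition Rsup (E : R -> Prop) : R :=
  epsilon (inhabits 0) (fun v => is_lub E v).

Definition semicopula (S : R -> R -> R) : Prop :=
  (forall x y, in01 x -> in01 y -> in01 (S x y)) /\
  (forall x1 x2 y, in01 x1 -> in01 x2 -> in01 y -> x1 <= x2 -> S x1 y <= S x2 y) /\
  (forall x y1 y2, in01 x -> in01 y1 -> in01 y2 -> y1 <= y2 -> S x y1 <= S x y2) /\
  (forall x, in01 x -> S x 1 = x /\ S 1 x = x).

Definition associative01 (S : R -> R -> R) : Prop :=
  forall x y z, in01 x -> in01 y -> in01 z -> S (S x y) z = S x (S y z).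

Definition strictly_increasing01 (g : R -> R) : Prop :=
  forall x y, in01 x -> in01 y -> x < y -> g x < g y.

Definition continuous_at01 (g : R -> R) (x : R) : Prop :=
  forall eps, 0 < eps -> exists delta, 0 < delta /\
    forall y, in01 y -> Rabs (y - x) < delta -> Rabs (g y - g x) < eps.

Definition left_continuous01 (g : R -> R) : Prop :=
  forall x, in01 x -> forall eps, 0 < eps -> exists delta, 0 < delta /\
    forall y, in01 y -> y <= x -> x - y < delta -> Rabs (g y - g x) < eps.

Definition isolated_discontinuities01 (g : R -> R) : Prop :=
  forall z, in01 z -> ~ continuous_at01 g z ->
    exists eps, 0 < eps /\
      forall x, in01 x -> z < x < z + eps -> continuous_at01 g x.

Definition sigma_algebra {X : Type} (A : (X -> Prop) -> Prop) : Prop :=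
  A (fun _ => False) /\
  (forall B, A B -> A (fun x => ~ B x)) /\
  (forall Bn : nat -> X -> Prop, (forall n, A (Bn n)) -> A (fun x => exists n, Bn n x)).

Definition borel (B : R -> Prop) : Prop :=
  forall Sigma : (R -> Prop) -> Prop, sigma_algebra Sigma ->
    (forall t, Sigma (fun x => t <= x)) -> Sigma B.

Definition measurable_fun {X : Type} (A : (X -> Prop) -> Prop) (f : X -> R) : Prop :=
  forall B, borel B -> A (fun x => B (f x)).

Definition capacity {X : Type} (A : (X -> Prop) -> Prop) (mu : (X -> Prop) -> R) : Prop :=
  (forall B, A B -> in01 (mu B)) /\
  mu (fun _ => False) = 0 /\
  mu (fun _ => True) = 1 /\
  (forall B C, A B -> A C -> (forall x, B x -> C x) -> mu B <= mu C).

Definition continuous_from_below {X : Type} (A : (X -> Prop) -> Prop)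
  (mu : (X -> Prop) -> R) : Prop :=
  forall Bn : nat -> X -> Prop,
    (forall n, A (Bn n)) -> (forall n x, Bn n x -> Bn (S n) x) ->
    Un_cv (fun n => mu (Bn n)) (mu (fun x => exists n, Bn n x)).

Definition sugeno {X : Type} (S : R -> R -> R) (mu : (X -> Prop) -> R) (f : X -> R) : R :=
  Rsup (fun v => exists t, in01 t /\ v = S t (mu (fun x => t <= f x))).

(* Write I = I_S(mu, f) and m t = mu({f >= t}).  For [S(a, I) <= I_S(mu, S(a, f))]:
   associativity turns S(a, S(t, m t)) into S(S(a,t), m t), and {f >= t} is contained
   in {S(a, f) >= S(a,t)}; left-continuity of S(a, .) at I = sup_t S(t, m t) then
   bounds S(a, I).  Conversely, since S(a, .) is nondecreasing, each level set
   {S(a, f) >= s} is a ray {f >= z} or {f > z}.  In the first case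
   S(s, m z) <= S(S(a,z), m z) = S(a, S(z, m z)) <= S(a, I); in the second case
   {f > z} is the increasing union of the rays {f >= z + 1/(n+1)}, and continuity of
   mu from below together with left-continuity of S(s, .) passes the same bound to
   the limit. *)
From Stdlib Require Import Reals Lra Classical ClassicalEpsilon FunctionalExtensionality PropExtensionality.
Open Scope R_scope.

Lemma Rsup_is_lub (E : R -> Prop) : bound E -> (exists x, E x) -> is_lub E (Rsup E).
Proof.
  intros Hb Hne; unfold Rsup; apply epsilon_spec.
  destruct (completeness E Hb Hne) as [m Hm]; exists m; exact Hm.
Qed.

Lemma is_lub_approx (E : R -> Prop) m d :
  is_lub E m -> 0 < d -> exists v, E v /\ m - d < v.
Proof.
  intros [_ Hleast] Hd; apply NNPP; intros Hno.
  assert (Hub : is_upper_bound E (m - d)).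
  { intros v Hv; apply Rnot_lt_le; intros Hlt; apply Hno; exists v; auto. }
  specialize (Hleast _ Hub); lra.
Qed.

Lemma pred_ext {X : Type} (P Q : X -> Prop) : (forall x, P x <-> Q x) -> P = Q.
Proof.
  intros H; apply functional_extensionality; intros x.
  apply propositional_extensionality; auto.
Qed.

Lemma in01_0 : in01 0.
Proof. unfold in01; lra. Qed.

Lemma in01_1 : in01 1.
Proof. unfold in01; lra. Qed.

Section Semicopula.

Variable S : R -> R -> R.
Hypothesis HS : semicopula S.

Lemma semicopula_in01 x y : in01 x -> in01 y -> in01 (S x y).
Proof. apply HS. Qed.

Lemma semicopula_monol x1 x2 y :
  in01 x1 -> in01 x2 -> in01 y -> x1 <= x2 -> S x1 y <= S x2 y.
Proof. apply HS. Qed.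

Lemma semicopula_monor x y1 y2 :
  in01 x -> in01 y1 -> in01 y2 -> y1 <= y2 -> S x y1 <= S x y2.
Proof. apply HS. Qed.

Lemma semicopula_0l y : in01 y -> S 0 y = 0.
Proof.
  intros Hy.
  pose proof (semicopula_monor 0 y 1 in01_0 Hy in01_1 (proj2 Hy)) as Hle.
  rewrite (proj1 (proj2 (proj2 (proj2 HS)) 0 in01_0)) in Hle.
  pose proof (semicopula_in01 0 y in01_0 Hy) as [Hge _]; lra.
Qed.

Lemma semicopula_0r x : in01 x -> S x 0 = 0.
Proof.
  intros Hx.
  pose proof (semicopula_monol x 1 0 Hx in01_1 in01_0 (proj2 Hx)) as Hle.
  rewrite (proj2 (proj2 (proj2 (proj2 HS)) 0 in01_0)) in Hle.
  pose proof (semicopula_in01 x 0 Hx in01_0) as [Hge _]; lra.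
Qed.

(* At the endpoints S(0, .) = 0 and S(1, .) is the identity. *)
Lemma left_continuous01_semicopula :
  (forall a, 0 < a < 1 -> left_continuous01 (S a)) ->
  forall c, in01 c -> left_continuous01 (S c).
Proof.
  intros Hlc c Hc.
  destruct (Req_dec c 0) as [->|Hc0]; [|destruct (Req_dec c 1) as [->|Hc1]].
  - intros x Hx eps Heps; exists 1; split; [lra|]; intros y Hy _ _.
    rewrite (semicopula_0l y Hy), (semicopula_0l x Hx), Rminus_0_r, Rabs_R0; lra.
  - intros x Hx eps Heps; exists eps; split; [lra|]; intros y Hy Hyx Hd.
    rewrite (proj2 (proj2 (proj2 (proj2 HS)) y Hy)),
            (proj2 (proj2 (proj2 (proj2 HS)) x Hx)).
    rewrite Rabs_left1; lra.
  - apply Hlc; destruct Hc; lra.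
Qed.

End Semicopula.

Lemma left_continuous01_upper_bound (g : R -> R) x c :
  left_continuous01 g -> in01 x ->
  (forall d, 0 < d -> exists y, in01 y /\ y <= x /\ x - y < d /\ g y <= c) ->
  g x <= c.
Proof.
  intros Hlc Hx Happrox; apply Rnot_lt_le; intros Hlt.
  destruct (Hlc x Hx (g x - c)) as [delta [Hdelta Hclose]]; [lra|].
  destruct (Happrox delta Hdelta) as [y [Hy [Hyx [Hd Hgy]]]].
  specialize (Hclose y Hy Hyx Hd).
  rewrite Rabs_left in Hclose; lra.
Qed.

Definition nondecreasing01 (g : R -> R) : Prop :=
  forall x y, in01 x -> in01 y -> x <= y -> g x <= g y.

(* The superlevel set {s <= g} of a nondecreasing g is [z, 1] or (z, 1] inside [0, 1];
   z is the supremum of the strict sublevel set (or 0 when it is empty). *)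
Lemma superlevel_set_ray (g : R -> R) s : nondecreasing01 g ->
  exists z, in01 z /\
   ((forall y, in01 y -> (s <= g y <-> z <= y)) \/
    (forall y, in01 y -> (s <= g y <-> z < y))).
Proof.
  intros Hg.
  set (L := fun y => in01 y /\ g y < s).
  destruct (classic (exists y, L y)) as [Hne|Hemp].
  - assert (Hb : bound L) by (exists 1; intros y [[_ Hy1] _]; exact Hy1).
    destruct (Rsup_is_lub L Hb Hne) as [Hub Hleast].
    set (z := Rsup L) in *.
    assert (Hz : in01 z).
    { destruct Hne as [y0 Hy0]; pose proof (Hub y0 Hy0).
      destruct Hy0 as [[Hy0 _] _]; split; [lra|].
      apply Hleast; intros y [[_ Hy1] _]; exact Hy1. }
    exists z; split; [exact Hz|].
    destruct (Rle_or_lt s (g z)) as [Hsz|Hzs]; [left|right]; intros y Hy; split.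
    + intros Hsy; apply Rnot_lt_le; intros Hyz.
      assert (Hyub : is_upper_bound L y).
      { intros l [Hl Hls]; apply Rnot_lt_le; intros Hyl.
        pose proof (Hg y l Hy Hl (Rlt_le _ _ Hyl)); lra. }
      specialize (Hleast y Hyub); lra.
    + intros Hzy; pose proof (Hg z y Hz Hy Hzy); lra.
    + intros Hsy; apply Rnot_le_lt; intros Hyz.
      pose proof (Hg y z Hy Hz Hyz); lra.
    + intros Hzy; apply Rnot_lt_le; intros Hys.
      assert (HLy : L y) by (split; assumption).
      specialize (Hub y HLy); lra.
  - exists 0; split; [exact in01_0|]; left; intros y Hy; split.
    + intros _; apply Hy.
    + intros _; apply Rnot_lt_le; intros Hys; apply Hemp; exists y; split; assumption.
Qed.

Lemma inv_INR_succ_pos n : 0 < / (INR n + 1).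
Proof. apply Rinv_0_lt_compat; pose proof (pos_INR n); lra. Qed.

Lemma open_ray_as_union z y : (exists n : nat, z + / (INR n + 1) <= y) <-> z < y.
Proof.
  split.
  - intros [n Hn]; pose proof (inv_INR_succ_pos n); lra.
  - intros Hzy; destruct (archimed_cor1 (y - z)) as [N [HN HN0]]; [lra|].
    exists N.
    assert (/ (INR N + 1) <= / INR N)
      by (apply Rinv_le_contravar; [apply lt_0_INR; exact HN0 | lra]).
    lra.
Qed.

Lemma borel_closed_ray t : borel (fun y => t <= y).
Proof. intros Sigma _ Hrays; apply Hrays. Qed.

Lemma borel_open_ray z : borel (fun y => z < y).
Proof.
  intros Sigma HSigma Hrays.
  replace (fun y => z < y) with (fun y => exists n, z + / (INR n + 1) <= y)
    by (apply pred_ext; intros y; apply open_ray_as_union).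
  apply (proj2 (proj2 HSigma)); intros n; apply Hrays.
Qed.

Lemma measurable_superlevel_comp {X : Type} (A : (X -> Prop) -> Prop) (f : X -> R) g s :
  (forall x, in01 (f x)) -> measurable_fun A f -> nondecreasing01 g ->
  A (fun x => s <= g (f x)).
Proof.
  intros Hf Hm Hg.
  destruct (superlevel_set_ray g s Hg) as [z [_ [Hray|Hray]]].
  - replace (fun x => s <= g (f x)) with (fun x => z <= f x)
      by (apply pred_ext; intros x; symmetry; apply Hray, Hf).
    apply Hm, borel_closed_ray.
  - replace (fun x => s <= g (f x)) with (fun x => z < f x)
      by (apply pred_ext; intros x; symmetry; apply Hray, Hf).
    apply Hm, borel_open_ray.
Qed.

Lemma capacity_open_level_limit {X : Type} (A : (X -> Prop) -> Prop) mu (f : X -> R) z :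
  continuous_from_below A mu -> (forall t, A (fun x => t <= f x)) ->
  Un_cv (fun n => mu (fun x => z + / (INR n + 1) <= f x)) (mu (fun x => z < f x)).
Proof.
  intros Hcfb Hlevel.
  replace (fun x => z < f x) with (fun x => exists n, z + / (INR n + 1) <= f x)
    by (apply pred_ext; intros x; apply open_ray_as_union).
  apply Hcfb; [intros n; apply Hlevel|].
  intros n x Hx; rewrite S_INR.
  assert (/ (INR n + 1 + 1) <= / (INR n + 1))
    by (apply Rinv_le_contravar; [pose proof (pos_INR n) | ]; lra).
  lra.
Qed.

Section SugenoIntegral.

Variables (S : R -> R -> R) (X : Type) (A : (X -> Prop) -> Prop).
Variables (mu : (X -> Prop) -> R) (f : X -> R).
Hypothesis HS : semicopula S.
Hypothesis Hcap : capacity A mu.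
Hypothesis Hlevel : forall t, A (fun x => t <= f x).

Lemma capacity_level_in01 t : in01 (mu (fun x => t <= f x)).
Proof. apply Hcap, Hlevel. Qed.

Lemma sugeno_is_lub :
  is_lub (fun v => exists t, in01 t /\ v = S t (mu (fun x => t <= f x))) (sugeno S mu f).
Proof.
  apply Rsup_is_lub.
  - exists 1; intros v [t [Ht ->]].
    apply (semicopula_in01 S HS t _ Ht (capacity_level_in01 t)).
  - exists (S 0 (mu (fun x => 0 <= f x))), 0; split; [exact in01_0 | reflexivity].
Qed.

Lemma sugeno_ge t : in01 t -> S t (mu (fun x => t <= f x)) <= sugeno S mu f.
Proof. intros Ht; apply sugeno_is_lub; exists t; split; [exact Ht | reflexivity]. Qed.

Lemma sugeno_in01 : in01 (sugeno S mu f).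
Proof.
  split.
  - apply Rle_trans with (S 0 (mu (fun x => 0 <= f x))); [|apply sugeno_ge, in01_0].
    apply (semicopula_in01 S HS 0 _ in01_0 (capacity_level_in01 0)).
  - apply sugeno_is_lub; intros v [t [Ht ->]].
    apply (semicopula_in01 S HS t _ Ht (capacity_level_in01 t)).
Qed.

End SugenoIntegral.

Section Homogeneity.

Variables (S : R -> R -> R) (X : Type) (A : (X -> Prop) -> Prop).
Variables (mu : (X -> Prop) -> R) (f : X -> R) (a : R).
Hypothesis HS : semicopula S.
Hypothesis Hassoc : associative01 S.
Hypothesis Hlc : forall c, in01 c -> left_continuous01 (S c).
Hypothesis Hcap : capacity A mu.
Hypothesis Hcfb : continuous_from_below A mu.
Hypothesis Hf : forall x, in01 (f x).
Hypothesis Hm : measurable_fun A f.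
Hypothesis Ha : in01 a.

Lemma level_measurable t : A (fun x => t <= f x).
Proof. apply Hm, borel_closed_ray. Qed.

Lemma scaled_level_measurable s : A (fun x => s <= S a (f x)).
Proof.
  apply measurable_superlevel_comp; [exact Hf | exact Hm |].
  intros y1 y2 Hy1 Hy2; apply (semicopula_monor S HS a y1 y2 Ha Hy1 Hy2).
Qed.

Lemma sugeno_scale_ge : S a (sugeno S mu f) <= sugeno S mu (fun x => S a (f x)).
Proof.
  apply (left_continuous01_upper_bound (S a));
    [apply Hlc, Ha | apply (sugeno_in01 S X A mu f HS Hcap level_measurable) |].
  intros d Hd.
  destruct (is_lub_approx _ _ d (sugeno_is_lub S X A mu f HS Hcap level_measurable) Hd)
    as [v [[t [Ht ->]] Hclose]].
  pose proof (capacity_level_in01 X A mu f Hcap level_measurable t) as Hm01.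
  exists (S t (mu (fun x => t <= f x))); split; [|split; [|split]].
  - apply (semicopula_in01 S HS t _ Ht Hm01).
  - apply (sugeno_ge S X A mu f HS Hcap level_measurable t Ht).
  - lra.
  - assert (Hat : in01 (S a t)) by apply (semicopula_in01 S HS a t Ha Ht).
    rewrite <- Hassoc by assumption.
    apply Rle_trans with (S (S a t) (mu (fun x => S a t <= S a (f x)))).
    + apply semicopula_monor; auto; [apply Hcap, scaled_level_measurable|].
      apply Hcap; [apply level_measurable | apply scaled_level_measurable |].
      intros x Hx; apply semicopula_monor; auto.
    + apply (sugeno_ge S X A mu (fun x => S a (f x)) HS Hcap scaled_level_measurable).
      exact Hat.
Qed.

Lemma scaled_level_bound s y : in01 s -> 0 <= y -> (y <= 1 -> s <= S a y) ->
  S s (mu (fun x => y <= f x)) <= S a (sugeno S mu f).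
Proof.
  intros Hs Hy0 Hsy.
  pose proof (sugeno_in01 S X A mu f HS Hcap level_measurable) as HI.
  destruct (Rle_or_lt y 1) as [Hy1|Hy1].
  - assert (Hy : in01 y) by (split; assumption).
    set (m := mu (fun x => y <= f x)).
    assert (Hm01 : in01 m) by apply (capacity_level_in01 X A mu f Hcap level_measurable).
    apply Rle_trans with (S (S a y) m).
    + apply semicopula_monol; auto; apply (semicopula_in01 S HS a y Ha Hy).
    + rewrite Hassoc by assumption.
      apply semicopula_monor; auto; [apply (semicopula_in01 S HS y m Hy Hm01)|].
      apply (sugeno_ge S X A mu f HS Hcap level_measurable y Hy).
  - replace (fun x => y <= f x) with (fun _ : X => False)
      by (apply pred_ext; intros x; pose proof (proj2 (Hf x)); split; [tauto | lra]).
    rewrite (proj1 (proj2 Hcap)), (semicopula_0r S HS s Hs).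
    apply (semicopula_in01 S HS a _ Ha HI).
Qed.

Lemma sugeno_scale_le : sugeno S mu (fun x => S a (f x)) <= S a (sugeno S mu f).
Proof.
  apply (sugeno_is_lub S X A mu _ HS Hcap scaled_level_measurable).
  intros v [s [Hs ->]].
  assert (Hnd : nondecreasing01 (S a))
    by (intros y1 y2 Hy1 Hy2; apply (semicopula_monor S HS a y1 y2 Ha Hy1 Hy2)).
  destruct (superlevel_set_ray (S a) s Hnd) as [z [Hz [Hray|Hray]]].
  - replace (fun x => s <= S a (f x)) with (fun x => z <= f x)
      by (apply pred_ext; intros x; symmetry; apply Hray, Hf).
    apply scaled_level_bound; [exact Hs | apply Hz |].
    intros Hz1; apply Hray; [exact Hz | lra].
  - replace (fun x => s <= S a (f x)) with (fun x => z < f x)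
      by (apply pred_ext; intros x; symmetry; apply Hray, Hf).
    apply (left_continuous01_upper_bound (S s)); [apply Hlc, Hs | apply Hcap, Hm,
      borel_open_ray |].
    intros d Hd.
    destruct (capacity_open_level_limit A mu f z Hcfb level_measurable d Hd) as [N HN].
    specialize (HN N (le_n N)); unfold R_dist in HN.
    pose proof (inv_INR_succ_pos N) as Hpos.
    exists (mu (fun x => z + / (INR N + 1) <= f x)); split; [|split; [|split]].
    + apply (capacity_level_in01 X A mu f Hcap level_measurable).
    + apply Hcap; [apply level_measurable | apply Hm, borel_open_ray |].
      intros x Hx; lra.
    + rewrite Rabs_minus_sym in HN; apply Rle_lt_trans with (2 := HN), Rle_abs.
    + apply scaled_level_bound; [exact Hs | destruct Hz; lra |].
      intros Hy1; apply Hray; [split; [destruct Hz|]; lra | lra].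
Qed.

End Homogeneity.

Theorem theorem3 (S : R -> R -> R) :
  semicopula S -> associative01 S ->
  (forall a, 0 < a < 1 ->
     strictly_increasing01 (S a) /\ left_continuous01 (S a) /\
     isolated_discontinuities01 (S a)) ->
  forall (X : Type) (A : (X -> Prop) -> Prop) (mu : (X -> Prop) -> R) (f : X -> R) (a : R),
    inhabited X -> sigma_algebra A -> capacity A mu -> continuous_from_below A mu ->
    (forall x, in01 (f x)) -> measurable_fun A f -> in01 a ->
    sugeno S mu (fun x => S a (f x)) = S a (sugeno S mu f).
Proof.
  intros HS Hassoc Hhyp X A mu f a _ _ Hcap Hcfb Hf Hm Ha.
  assert (Hlc : forall c, in01 c -> left_continuous01 (S c)).
  { apply left_continuous01_semicopula; [exact HS|].
    intros c Hc; apply (Hhyp c Hc). }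
  apply Rle_antisym.
  - apply (sugeno_scale_le S X A mu f a HS Hassoc Hlc Hcap Hcfb Hf Hm Ha).
  - apply (sugeno_scale_ge S X A mu f a HS Hassoc Hlc Hcap Hf Hm Ha).
Qed.
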